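(* Let $R$ be a $*$-ring. Then $R$ is strongly $J$-$*$-clean if and only if (1) $R$ is strongly $*$-clean; (2) $a+a^*\in J(R)$ for every $a\in R$; and (3) $J(R)=\{x\in R\mid 1+xx^*\in U(R)\}$.
   Context: All rings are associative with identity. A $*$-ring is a ring $R$ with an involution $*$, i.e. a map $a\mapsto a^*$ with $(a+b)^*=a^*+b^*$, $(ab)^*=b^*a^*$, $(a^* )^*=a$. $U(R)$ denotes the group of units and $J(R)$ the Jacobson radical of $R$. A projection is an element $e$ with $e^2=e=e^*$. $R$ is strongly $J$-$*$-clean if every $a\in R$ can be written $a=e+u$ with $e$ a projection, $u\in J(R)$ and $ae=ea$. $R$ is strongly $*$-clean if every $a\in R$ can be written $a=e+u$ with $e$ a projection, $u\in U(R)$ and $eu=ue$. *)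

From mathcomp Require Import all_boot all_algebra.
Set Implicit Arguments. Unset Strict Implicit. Unset Printing Implicit Defensive.
Import GRing.Theory.
Local Open Scope ring_scope.

Section StarRings.
Variable R : pzRingType.

Definition is_involution (star : R -> R) : Prop :=
  [/\ forall a b, star (a + b) = star a + star b,
      forall a b, star (a * b) = star b * star a
    & forall a, star (star a) = a].

Definition is_unit (u : R) : Prop := exists v : R, u * v = 1 /\ v * u = 1.

Definition left_ideal (I : R -> Prop) : Prop :=
  [/\ I 0, forall x y, I x -> I y -> I (x + y) & forall r x, I x -> I (r * x)].

Definition maximal_left_ideal (I : R -> Prop) : Prop :=
  [/\ left_ideal I, ~ I 1 &
      forall I' : R -> Prop, left_ideal I' -> (forall x, I x -> I' x) ->
        (forall x, I' x <-> I x) \/ (forall x, I' x)].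

Definition jacobson (x : R) : Prop :=
  forall I : R -> Prop, maximal_left_ideal I -> I x.

Definition is_projection (star : R -> R) (e : R) : Prop :=
  e * e = e /\ star e = e.

Definition strongly_J_star_clean (star : R -> R) : Prop :=
  forall a : R, exists e u : R,
    [/\ is_projection star e, jacobson u, a = e + u & a * e = e * a].

Definition strongly_star_clean (star : R -> R) : Prop :=
  forall a : R, exists e u : R,
    [/\ is_projection star e, is_unit u, a = e + u & e * u = u * e].

End StarRings.

From mathcomp Require Import all_boot all_algebra.
From mathcomp Require classical_sets.
From Stdlib Require Import Classical.
Set Implicit Arguments. Unset Strict Implicit. Unset Printing Implicit Defensive.
Import GRing.Theory.
Local Open Scope ring_scope.

(* The two conditions are exchanged by the passage from a projection [e] to [1 - e].
   If [a = e + u] with [u] in [J(R)], then [a = (1 - e) + ((2e - 1) + u)], where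
   [2e - 1] is a unit (its square is [1]), so a unit plus a radical element is a unit.
   Conversely, if [a = e + v] with [v] a unit, then [1 - v] lies in [J(R)] by (3),
   since [2 = 1 + 1^*] is in [J(R)] by (2), so [a = (1 - e) + (2e - (1 - v))].
   Condition (3) itself follows from [J(R)] being [*]-closed and from idempotents
   [e] with [1 + e] a unit being [0] when [2] is in [J(R)].  The needed facts on
   [J(R)], the intersection of the maximal left ideals, rest on Zorn's lemma. *)

Section JacobsonRadical.
Variable R : pzRingType.
Implicit Types a b r u v x y j : R.

Lemma jacobsonD x y : jacobson x -> jacobson y -> jacobson (x + y).
Proof.
by move=> Jx Jy I MI; case: (MI) => -[_ ID _] _ _; apply: ID; [apply: Jx | apply: Jy].
Qed.

Lemma jacobsonMl r x : jacobson x -> jacobson (r * x).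
Proof. by move=> Jx I MI; case: (MI) => -[_ _ IM] _ _; apply: IM; apply: Jx. Qed.

Lemma jacobsonN x : jacobson x -> jacobson (- x).
Proof. by rewrite -mulN1r; apply: jacobsonMl. Qed.

Lemma is_unitM u v : is_unit u -> is_unit v -> is_unit (u * v).
Proof.
move=> [u' [uu' u'u]] [v' [vv' v'v]]; exists (v' * u'); split.
  by rewrite mulrA -(mulrA u) vv' mulr1.
by rewrite mulrA -(mulrA v') u'u mulr1.
Qed.

Lemma is_unitN u : is_unit u -> is_unit (- u).
Proof. by move=> [u' [uu' u'u]]; exists (- u'); rewrite !mulrNN. Qed.

Lemma exists_maximal_left_ideal a :
  ~ (exists w, w * a = 1) -> exists M, maximal_left_ideal M /\ M a.
Proof.
move=> a_not_left_unit.
(* Zorn is applied to the sets [I] closed under [+] and left multiplication such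
   that [1 \notin I + R a]; unlike the proper left ideals containing [a], this
   family is closed under unions of chains even for the empty chain. *)
pose span (I : R -> Prop) x := exists i r, I i /\ x = i + r * a.
pose P (I : R -> Prop) := [/\ forall x y, I x -> I y -> I (x + y),
                               forall r x, I x -> I (r * x) & ~ span I 1].
have [|A [[AD AM A1] maxA]] := @classical_sets.Zorn_bigcup R P.
  move=> F FP Ftot; split.
  - move=> x y [X FX Xx] [Y FY Yy].
    have [XY|YX] := Ftot _ _ FX FY.
      by exists Y => //; case: (FP _ FY) => YD _ _; apply: YD => //; apply: XY.
    by exists X => //; case: (FP _ FX) => XD _ _; apply: XD => //; apply: YX.
  - by move=> r x [X FX Xx]; exists X => //; case: (FP _ FX) => _ XM _; apply: XM.
  - move=> [i [r [[X FX Xi] e]]]; case: (FP _ FX) => _ _; apply.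
    by exists i, r.
have below_max I : P I -> (forall x, A x -> I x) -> forall x, I x -> A x.
  move=> PI AI x Ix; apply: NNPP => nAx.
  by apply: (maxA I) => //; split=> // IA; apply/nAx/IA.
have A0 : A 0.
  apply: NNPP => nA0; have A_empty x : ~ A x by move=> /(AM 0); rewrite mul0r.
  have PRa : P (fun x => exists r, x = r * a).
    split.
    - by move=> _ _ [r ->] [s ->]; exists (r + s); rewrite mulrDl.
    - by move=> s _ [r ->]; exists (s * r); rewrite mulrA.
    - by move=> [_ [s [[r ->] e]]]; apply: a_not_left_unit; exists (r + s); rewrite mulrDl e.
  apply: (A_empty 0); apply: (below_max _ PRa) => [x /A_empty //|].
  by exists 0; rewrite mul0r.
exists (span A); split; last by exists 0, 1; rewrite add0r mul1r.
have spanA_ideal : left_ideal (span A).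
  split.
  - by exists 0, 0; rewrite mul0r addr0.
  - move=> _ _ [i [r [Ai ->]]] [j [s [Aj ->]]].
    by exists (i + j), (r + s); split; [apply: AD | rewrite mulrDl addrACA].
  - move=> s _ [i [r [Ai ->]]].
    by exists (s * i), (s * r); split; [apply: AM | rewrite mulrDr mulrA].
split=> // I [_ ID IM] spanAI.
have [I1|nI1] := classic (I 1).
  by right=> x; rewrite -(mulr1 x); apply: IM.
have Ia : I a by apply: spanAI; exists 0, 1; rewrite add0r mul1r.
have PI : P I.
  by split=> // -[i [r [Ii e]]]; apply: nI1; rewrite e; apply: ID => //; apply: IM.
have AI y : A y -> I y by move=> Ay; apply: spanAI; exists y, 0; rewrite mul0r addr0.
left=> x; split; last exact: spanAI.
move=> Ix; exists x, 0; rewrite mul0r addr0; split=> //; exact: below_max PI AI x Ix.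
Qed.

Lemma jacobson_left_unit1D j : jacobson j -> exists w, w * (1 + j) = 1.
Proof.
move=> Jj; apply: NNPP => not_left_unit.
have [M [maxM Mj]] := exists_maximal_left_ideal not_left_unit.
case: (maxM) => -[_ MD _] M1 _.
by apply: M1; rewrite -(addrK j 1); apply: MD Mj (jacobsonN Jj maxM).
Qed.

Lemma is_unit1D_jacobson j : jacobson j -> is_unit (1 + j).
Proof.
move=> Jj; have [w wj] := jacobson_left_unit1D Jj.
have w_eq : w = 1 + - (w * j) by rewrite -wj mulrDr mulr1 addrK.
have [w' w'w] : exists w', w' * w = 1.
  by rewrite w_eq; apply: jacobson_left_unit1D; apply: jacobsonN (jacobsonMl w Jj).
have w'_eq : w' = 1 + j by rewrite -[w']mulr1 -{1}wj mulrA w'w mul1r.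
by exists w; rewrite -w'_eq in wj *.
Qed.

Lemma jacobsonP x : jacobson x <-> forall r, is_unit (1 + r * x).
Proof.
split=> [Jx r|units M maxM]; first exact: is_unit1D_jacobson (jacobsonMl r Jx).
apply: NNPP => nMx; case: (maxM) => [[M0 MD MM] M1 M_maximal].
pose I y := exists m r, M m /\ y = m + r * x.
have I_ideal : left_ideal I.
  split.
  - by exists 0, 0; rewrite mul0r addr0.
  - move=> _ _ [m [r [Mm ->]]] [m' [r' [Mm' ->]]].
    by exists (m + m'), (r + r'); split; [apply: MD | rewrite mulrDl addrACA].
  - move=> s _ [m [r [Mm ->]]].
    by exists (s * m), (s * r); split; [apply: MM | rewrite mulrDr mulrA].
have MI y : M y -> I y by exists y, 0; rewrite mul0r addr0.
have [I_eq|I_all] := M_maximal I I_ideal MI.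
  by apply/nMx/I_eq; exists 0, 1; rewrite add0r mul1r.
have [m [r [Mm m_eq]]] := I_all 1.
have [v [_ v_unit]] := units (- r).
have m_eq' : m = 1 + - r * x by rewrite mulNr m_eq addrK.
by apply: M1; rewrite -v_unit -m_eq'; apply: MM.
Qed.

Lemma is_unit1DMC a b : is_unit (1 + a * b) -> is_unit (1 + b * a).
Proof.
move=> [v [abv vab]]; exists (1 - b * v * a); split.
  have abv_eq : a * b * v = 1 - v by rewrite -abv mulrDl mul1r addrAC subrr add0r.
  have bavb : b * a * (b * v * a) = b * a - b * v * a.
    by rewrite !mulrA -(mulrA b a b) -(mulrA b (a * b) v) abv_eq mulrBr mulr1 mulrBl.
  by rewrite mulrDl mul1r mulrBr mulr1 bavb subKr subrK.
have vab_eq : v * (a * b) = 1 - v by rewrite -vab mulrDr mulr1 addrAC subrr add0r.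
have bvaba : b * v * a * (b * a) = b * a - b * v * a.
  by rewrite !mulrA -(mulrA (b * v) a b) -(mulrA b v (a * b)) vab_eq mulrBr mulr1 mulrBl.
by rewrite mulrBl mul1r mulrDr mulr1 bvaba subrKC addrK.
Qed.

Lemma is_unitDjacobson u j : is_unit u -> jacobson j -> is_unit (u + j).
Proof.
move=> [v [uv vu]] Jj.
have -> : u + j = u * (1 + v * j) by rewrite mulrDr mulr1 mulrA uv mul1r.
by apply: is_unitM; [exists v | apply: is_unit1D_jacobson (jacobsonMl v Jj)].
Qed.

End JacobsonRadical.

Section Idempotents.
Variable R : pzRingType.
Implicit Types e : R.

Lemma idempotent_unit_eq1 e : e * e = e -> is_unit e -> e = 1.
Proof. by move=> ee [v [ev _]]; rewrite -ev -{2}ee -mulrA ev mulr1. Qed.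

Lemma idempotent_reflection_sqr e : e * e = e -> (e + e - 1) * (e + e - 1) = 1.
Proof.
move=> ee; have e_refl : e * (e + e - 1) = e by rewrite mulrBr mulrDr ee mulr1 addrK.
by rewrite mulrBl mul1r mulrDl e_refl subKr.
Qed.

Lemma idempotent_compl e : e * e = e -> (1 - e) * (1 - e) = 1 - e.
Proof. by move=> ee; rewrite mulrBl mul1r mulrBr mulr1 ee subrr subr0. Qed.

Lemma idempotent_eq0 e : jacobson (1 + 1 : R) -> e * e = e -> is_unit (1 + e) -> e = 0.
Proof.
(* [1 - e] is an idempotent unit, being [1 + e] up to the radical element [2 e]. *)
move=> J2 ee unit1De.
have unit1Be : is_unit (1 - e).
  have -> : 1 - e = 1 + e + - (e * (1 + 1)) by rewrite mulrDr mulr1 opprD addrA addrK.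
  exact: is_unitDjacobson unit1De (jacobsonN (jacobsonMl e J2)).
have compl_eq1 := idempotent_unit_eq1 (idempotent_compl ee) unit1Be.
by apply/oppr_inj/(addrI 1); rewrite compl_eq1 oppr0 addr0.
Qed.

End Idempotents.

Section StarRing.
Variables (R : pzRingType) (star : R -> R).
Hypothesis Hstar : is_involution star.
Implicit Types a e u v x : R.

Lemma starD x y : star (x + y) = star x + star y. Proof. by case: Hstar. Qed.
Lemma starM x y : star (x * y) = star y * star x. Proof. by case: Hstar. Qed.
Lemma starK x : star (star x) = x. Proof. by case: Hstar. Qed.

Lemma star0 : star 0 = 0.
Proof. by apply: (@addrI _ (star 0)); rewrite -starD !addr0. Qed.

Lemma starN x : star (- x) = - star x.
Proof. by apply: (@addrI _ (star x)); rewrite -starD !subrr star0. Qed.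

Lemma star1 : star 1 = 1.
Proof. by rewrite -[LHS]mulr1 -[X in _ * X]starK -starM mulr1 starK. Qed.

Lemma is_unit_star u : is_unit u -> is_unit (star u).
Proof. by move=> [v [uv vu]]; exists (star v); rewrite -!starM uv vu star1. Qed.

Lemma jacobson_star x : jacobson x -> jacobson (star x).
Proof.
move=> Jx; apply/jacobsonP=> r.
have -> : 1 + r * star x = star (1 + x * star r) by rewrite starD star1 starM starK.
by apply: is_unit_star; apply: is_unit1DMC; move/jacobsonP: Jx; apply.
Qed.

Lemma jacobsonMr x r : jacobson x -> jacobson (x * r).
Proof.
move=> Jx; rewrite -[x * r]starK starM.
by apply: jacobson_star; apply: jacobsonMl; apply: jacobson_star.
Qed.

Lemma is_unit1DMstar_jacobson x : jacobson x -> is_unit (1 + x * star x).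
Proof. by move=> Jx; apply: is_unit1D_jacobson; apply: jacobsonMr. Qed.

Lemma is_projection_compl e : is_projection star e -> is_projection star (1 - e).
Proof. by move=> [ee se]; split; [apply: idempotent_compl | rewrite starD starN star1 se]. Qed.

Section StronglyJStarClean.
Hypothesis HJclean : strongly_J_star_clean star.

Lemma jacobson_two : jacobson (1 + 1 : R).
Proof.
(* Decompose [-1 = e + u]: then [e = -(1 + u)] is an idempotent unit, so [e = 1] and [u = -2]. *)
have [e [u [[ee _] Ju minus1_eq _]]] := HJclean (-1).
have e_eq : e = - (1 + u) by apply/(addIr u); rewrite -minus1_eq opprD subrK.
have e1 : e = 1.
  by apply: (idempotent_unit_eq1 ee); rewrite e_eq; apply/is_unitN/is_unit1D_jacobson.
have -> : (1 + 1 : R) = - u by rewrite -[X in _ + X]opprK minus1_eq e1 opprD addNKr.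
exact: jacobsonN.
Qed.

Lemma J_clean_star_clean : strongly_star_clean star.
Proof.
move=> a; have [e [u [Pe Ju a_eq ae_comm]]] := HJclean a.
exists (1 - e), (a - (1 - e)); split.
- exact: is_projection_compl.
- have -> : a - (1 - e) = (e + e - 1) + u by rewrite a_eq opprB [LHS]addrAC addrA.
  apply: is_unitDjacobson => //.
  by exists (e + e - 1); split; apply: idempotent_reflection_sqr; case: Pe.
- by rewrite addrC subrK.
- apply: commrB; last exact: commr_refl.
  exact/commr_sym/(commrB (commr1 a)).
Qed.

Lemma J_clean_jacobson_addr_star a : jacobson (a + star a).
Proof.
have [e [u [[_ se] Ju -> _]]] := HJclean a.
rewrite starD se addrACA -{1 2}(mulr1 e) -mulrDr.
apply: jacobsonD; first by apply: jacobsonMl; apply: jacobson_two.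
by apply: jacobsonD => //; apply: jacobson_star.
Qed.

Lemma J_clean_unit1DMstar x : is_unit (1 + x * star x) -> jacobson x.
Proof.
move=> unit1Dxx; have [e [u [[ee se] Ju x_eq _]]] := HJclean x.
pose j := e * star u + (u * e + u * star u).
have Jj : jacobson j.
  apply: jacobsonD; first by apply: jacobsonMl; apply: jacobson_star.
  by apply: jacobsonD; apply: jacobsonMr.
have xx_eq : 1 + x * star x = 1 + e + j.
  by rewrite x_eq starD se mulrDl !mulrDr ee -!addrA.
have unit1De : is_unit (1 + e).
  by rewrite -(addrK j (1 + e)) -xx_eq; apply: is_unitDjacobson (jacobsonN Jj).
by rewrite x_eq (idempotent_eq0 jacobson_two ee unit1De) add0r.
Qed.

End StronglyJStarClean.

Section StronglyStarClean.
Hypotheses (Hclean : strongly_star_clean star)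
  (Hsym : forall a, jacobson (a + star a))
  (Hunit : forall x, is_unit (1 + x * star x) -> jacobson x).

Let jacobson_two_sym : jacobson (1 + 1 : R).
Proof. by rewrite -[X in _ + X]star1; apply: Hsym. Qed.

Lemma jacobson_1Bunit v : is_unit v -> jacobson (1 - v).
Proof.
(* With [x := 1 - v], [1 + x x^*] is the unit [v (2 - v)] plus the radical element [x (x + x^* )]. *)
move=> unit_v; apply: Hunit; set x := 1 - v.
have -> : 1 + x * star x = (1 - x * x) + x * (x + star x) by rewrite (mulrDr x x) subrKA.
apply: is_unitDjacobson; last exact: jacobsonMl.
have -> : 1 - x * x = v * (- v + (1 + 1)).
  rewrite /x mulrBl mul1r mulrBr mulr1 mulrDr (mulrDr v 1 1) mulr1 mulrN.
  by rewrite opprB addrC -addrA opprB subrK [LHS]addrAC addrC.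
exact/is_unitM/(is_unitDjacobson (is_unitN unit_v) jacobson_two_sym).
Qed.

Lemma star_clean_J_clean : strongly_J_star_clean star.
Proof.
move=> a; have [e [v [Pe unit_v a_eq ev_comm]]] := Hclean a.
have ae_comm : GRing.comm a e.
  by apply: commr_sym; rewrite a_eq; apply: commrD; [exact: commr_refl | exact: ev_comm].
exists (1 - e), (a - (1 - e)); split.
- exact: is_projection_compl.
- have -> : a - (1 - e) = e * (1 + 1) + - (1 - v).
    by rewrite a_eq mulrDr mulr1 !opprB addrACA.
  exact: jacobsonD (jacobsonMl e jacobson_two_sym) (jacobsonN (jacobson_1Bunit unit_v)).
- by rewrite addrC subrK.
- exact: commrB (commr1 a) ae_comm.
Qed.

End StronglyStarClean.

End StarRing.

Theorem corollary3p5 (R : pzRingType) (star : R -> R) (Hstar : is_involution star) :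
  strongly_J_star_clean star <->
  [/\ strongly_star_clean star,
      (forall a : R, jacobson (a + star a))
    & (forall x : R, jacobson x <-> is_unit (1 + x * star x))].
Proof.
split=> [HJclean | [Hclean Hsym Hunit]].
  split; [exact: J_clean_star_clean | exact: J_clean_jacobson_addr_star |].
  by move=> x; split; [apply: is_unit1DMstar_jacobson | apply: J_clean_unit1DMstar].
by apply: star_clean_J_clean => // x /Hunit.
Qed.
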